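(* For every $X\in\{\mathsf{T},\mathsf{S}\}^*$, the sequence $X\mathsf{S}$ is not transitive; that is, there exist taxonomies and an initial preference formula for which the strict relation $\succ_{X\mathsf{S}}$ is not transitive.
   Context: Fix attribute–taxonomy pairs $A_1{:}T_1,\dots,A_d{:}T_d$ with distinct attribute names, where each taxonomy $T_i=(V_i,\le_{V_i})$ is a poset. A t-tuple over a t-schema $S\subseteq\{A_1{:}T_1,\dots,A_d{:}T_d\}$ maps each $A_i$ in $S$ to a value of $V_i$; $\mathcal{D}$ is the set of all t-tuples over all such t-schemas. A preference relation is a binary relation $\succeq$ on $\mathcal{D}$; its strict part is $t_1\succ t_2$ iff $t_1\succeq t_2$ and not $t_2\succeq t_1$. Preferences are given by a formula $F(x,y)=\bigvee_i P_i(x,y)$, a disjunction of statements; each statement $P_i$ is a disjunction of clauses, each clause a satisfiable conjunction of atoms of the forms $x[A_i]\le_{V_i} v$, $x[A_i]\not\le_{V_i} v$, $y[A_i]\le_{V_i} v$, $y[A_i]\not\le_{V_i} v$; the formula induces $t_1\succeq t_2\iff F(t_1,t_2)$. Operator $\mathsf{T}$ maps a formula to one inducing the transitive closure over $\mathcal{D}$ of the induced relation. Operator $\mathsf{S}$ (specificity-based refinement): repeat rounds; in a round, for each statement $P_i$ let $\mathrm{Impl}(P_i)$ be the set of statements $P_j$ such that $P_j(t_2,t_1)\Rightarrow P_i(t_1,t_2)$ for all $t_1,t_2\in\mathcal{D}$ but not conversely; simultaneously replace every $P_i$ with nonempty $\mathrm{Impl}(P_i)$ by $P_i(x,y)\wedge\bigwedge_{P_j\in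 \mathrm{Impl}(P_i)}\neg P_j(y,x)$; stop when no $\mathrm{Impl}$ set is nonempty. After each operator, contradictory clauses and subsumed statements are removed. For $X\in\{\mathsf{T},\mathsf{S}\}^*$, $\succeq_X$ (strict part $\succ_X$) is the relation induced by applying the operators of $X$ in order to the initial formula. A sequence $X$ is transitive if $\succ_X$ is transitive for every initial preference formula. *)

From Stdlib Require List.
From mathcomp Require Import all_boot.
Set Implicit Arguments. Unset Strict Implicit. Unset Printing Implicit Defensive.

Record Taxonomy := {
  tcar :> Type;
  tle : tcar -> tcar -> Prop;
  tle_refl : forall a, tle a a;
  tle_antisym : forall a b, tle a b -> tle b a -> a = b;
  tle_trans : forall a b c, tle a b -> tle b c -> tle a c }.

Section Prefs.
Variable d : nat.
(* Attribute A_i : T_i for i < d (attribute names are the indices, hence distinct). *)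
Variable tax : 'I_d -> Taxonomy.

(* The domain D: t-tuples over all t-schemas S ⊆ {A_1:T_1,...,A_d:T_d};
   [t i = None] means A_i is not in the schema of t. *)
Definition ttuple := forall i : 'I_d, option (tax i).

Inductive atom :=
| AxLe  (i : 'I_d) (v : tax i)
| AxNLe (i : 'I_d) (v : tax i)
| AyLe  (i : 'I_d) (v : tax i)
| AyNLe (i : 'I_d) (v : tax i).

Definition clause := list atom.        (* conjunction *)
Definition statement := list clause.   (* disjunction of clauses *)
Definition formula := list statement.  (* disjunction of statements *)

Definition val_le (i : 'I_d) (o : option (tax i)) (v : tax i) : Prop :=
  match o with Some u => tle u v | None => False end.
Definition val_nle (i : 'I_d) (o : option (tax i)) (v : tax i) : Prop :=
  match o with Some u => ~ tle u v | None => False end.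

Definition atom_sem (a : atom) (x y : ttuple) : Prop :=
  match a with
  | AxLe i v => val_le (x i) v
  | AxNLe i v => val_nle (x i) v
  | AyLe i v => val_le (y i) v
  | AyNLe i v => val_nle (y i) v
  end.

Definition clause_sem (c : clause) (x y : ttuple) : Prop :=
  forall a, List.In a c -> atom_sem a x y.
Definition clause_satisfiable (c : clause) : Prop :=
  exists x y, clause_sem c x y.
Definition statement_sem (s : statement) (x y : ttuple) : Prop :=
  exists c, List.In c s /\ clause_sem c x y.

Definition wf_formula (F : formula) : Prop :=
  forall s c, List.In s F -> List.In c s -> clause_satisfiable c.

Definition srel := ttuple -> ttuple -> Prop.
Definition sform := list srel.

Definition formula_sem (F : formula) : sform := map statement_sem F.

Definition induced (L : sform) : srel := fun x y => exists P, List.In P L /\ P x y.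
Definition strict_part (R : srel) : srel := fun x y => R x y /\ ~ R y x.
Definition rtransitive (R : srel) : Prop :=
  forall a b c, R a b -> R b c -> R a c.

Definition rimplies (P Q : srel) : Prop := forall x y, P x y -> Q x y.

Definition srel0 : srel := fun _ _ => False.

Definition no_subsumed (G : sform) : Prop :=
  forall i j, i < size G -> j < size G -> i <> j ->
    ~ rimplies (nth srel0 G i) (nth srel0 G j).

(* Removal of subsumed statements (and of contradictory clauses, which is
   semantically the identity): G keeps statements of L, every statement of L
   is subsumed by some kept one, and no kept statement is subsumed by another. *)
Definition reduce (L G : sform) : Prop :=
  (forall P, List.In P G -> List.In P L) /\
  (forall P, List.In P L -> exists Q, List.In Q G /\ rimplies P Q) /\
  no_subsumed G.

Definition compose (P Q : srel) : srel := fun x y => exists z, P x z /\ Q z y.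

Inductive chain (L : sform) : srel -> Prop :=
| chain_base P : List.In P L -> chain L P
| chain_comp P Q : chain L P -> List.In Q L -> chain L (compose P Q).

Definition T_step (L G : sform) : Prop :=
  (forall P, List.In P G -> chain L P) /\
  (forall P, chain L P -> exists Q, List.In Q G /\ rimplies P Q) /\
  no_subsumed G.

Definition Impl (L : sform) (i j : nat) : Prop :=
  let Pi := nth srel0 L i in let Pj := nth srel0 L j in
  (forall t1 t2, Pj t2 t1 -> Pi t1 t2) /\ ~ (forall t1 t2, Pi t1 t2 -> Pj t2 t1).

Definition S_round (L : sform) : sform :=
  [seq (fun x y => nth srel0 L i x y /\
          forall j, j < size L -> Impl L i j -> ~ nth srel0 L j y x)
   | i <- iota 0 (size L)].

Definition no_Impl (L : sform) : Prop :=
  forall i j, i < size L -> j < size L -> ~ Impl L i j.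

Definition S_step (L G : sform) : Prop :=
  exists n, no_Impl (iter n S_round L) /\ reduce (iter n S_round L) G.

Inductive op := OpT | OpS.

Definition op_step (o : op) : sform -> sform -> Prop :=
  match o with OpT => T_step | OpS => S_step end.

(* [outcome X L G]: G is a formula obtained by applying the operators of X,
   in order (leftmost first), to L. *)
Fixpoint outcome (X : list op) (L G : sform) : Prop :=
  match X with
  | [::] => G = L
  | o :: X' => exists M, op_step o L M /\ outcome X' M G
  end.

End Prefs.

From HB Require Import structures.
From mathcomp Require Import all_boot.
From Stdlib Require List.
Set Implicit Arguments. Unset Strict Implicit. Unset Printing Implicit Defensive.

(* Take one attribute whose taxonomy is the discrete order on {A, B, C}.  An
   initial formula M of six statements is its own transitive closure; two
   rounds of specificity refinement turn it into a formula N, which S leaves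
   unchanged and which T maps back to M.  So whatever X is, XS ends in N, and
   the strict preference of N has C > A > B but not C > B.
   The operators only see the extensions of statements, which here depend on
   a tuple only through its value at the attribute, so every step can be
   computed on finite relations between option values. *)

Lemma In_nthP (T : Type) (x0 : T) (s : seq T) x :
  List.In x s <-> exists2 i, i < size s & nth x0 s i = x.
Proof.
elim: s x => [|y s IH] x /=; first by split=> // -[].
split=> [[<-|] | [[|i] /= lt_i <-]]; [by exists 0 | | by left | by right; apply/IH; exists i].
by case/IH=> i lt_i <-; exists i.+1.
Qed.

Lemma nth_In (T : Type) (x0 : T) (s : seq T) i : i < size s -> List.In (nth x0 s i) s.
Proof. by move=> lt_i; apply/(In_nthP x0); exists i. Qed.

Lemma In_mem (T : eqType) (x : T) (s : seq T) : List.In x s <-> x \in s.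
Proof.
elim: s => //= y s IH; rewrite in_cons.
split=> [[->|/IH ->] | /orP[/eqP->|/IH]]; rewrite ?eqxx ?orbT; auto.
Qed.

Lemma In_map (A B : Type) (f : A -> B) (s : seq A) y :
  List.In y (map f s) <-> exists x, f x = y /\ List.In x s.
Proof. exact: List.in_map_iff. Qed.

Lemma seq_choice (A B : Type) (x0 : A) (y0 : B) (R : A -> B -> Prop) (s : seq B) :
  (forall i, i < size s -> exists x, R x (nth y0 s i)) ->
  exists2 t : seq A, size t = size s & forall i, i < size s -> R (nth x0 t i) (nth y0 s i).
Proof.
elim: s => [|y s IH] exR; first by exists [::].
have [x Rx] := exR 0 isT.
have [t size_t Rt] := IH (fun i => exR i.+1).
by exists (x :: t) => [|[|i]] /=; rewrite ?size_t //; apply: Rt.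
Qed.

Lemma outcome_snoc_S d (tax : 'I_d -> Taxonomy) (Inv Goal : sform tax -> Prop) :
  (forall o L, Inv L -> (exists M, op_step o L M) /\ (forall M, op_step o L M -> Inv M)) ->
  (forall L G, Inv L -> S_step L G -> Goal G) ->
  forall X L, Inv L ->
    (exists G, outcome (X ++ [:: OpS]) L G) /\
    (forall G, outcome (X ++ [:: OpS]) L G -> Goal G).
Proof.
move=> step goal; elim=> [|o X IH] L InvL /=.
  have [[G SG] _] := step OpS L InvL.
  by split=> [|_ [G' [SG' ->]]]; [exists G, G | exact: goal SG'].
have [[M oM] oInv] := step o L InvL.
have [[G XG] _] := IH M (oInv M oM).
split=> [|G' [M' [oM' XG']]]; first by exists G, M.
exact: (proj2 (IH M' (oInv M' oM')) G' XG').
Qed.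

Section Lifting.

Variables (d : nat) (tax : 'I_d -> Taxonomy) (K : eqType) (key : ttuple tax -> K).
Hypothesis key_surj : forall k, exists x, key x = k.

Local Notation pairs := (seq (K * K)).
Local Notation srel0 := (@srel0 d tax).

Definition lift (r : pairs) : srel tax := fun x y => (key x, key y) \in r.
Definition is_lift (P : srel tax) (r : pairs) := forall x y, P x y <-> lift r x y.

Definition lifts (L : sform tax) (Rs : seq pairs) :=
  (forall P, List.In P L -> exists2 r, r \in Rs & is_lift P r) /\
  (forall r, r \in Rs -> exists2 P, List.In P L & is_lift P r).

Definition rsub (r1 r2 : pairs) := all (mem r2) r1.
Definition rsame (r1 r2 : pairs) := rsub r1 r2 && rsub r2 r1.
Definition rinv (r : pairs) : pairs := [seq (p.2, p.1) | p <- r].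
Definition rcomp (r1 r2 : pairs) : pairs :=
  [seq (p.1, q.2) | p <- r1, q <- [seq q <- r2 | q.1 == p.2]].

Lemma rsub_lift r1 r2 : rsub r1 r2 -> rimplies (lift r1) (lift r2).
Proof. by move=> /allP sub12 x y /sub12. Qed.

Lemma lift_rsub r1 r2 : rimplies (lift r1) (lift r2) <-> rsub r1 r2.
Proof.
split=> [sub12 | /rsub_lift //].
apply/allP=> -[a c]; have [[x <-] [y <-]] := (key_surj a, key_surj c).
exact: sub12.
Qed.

Lemma rimplies_lift P Q rP rQ :
  is_lift P rP -> is_lift Q rQ -> rimplies P Q <-> rsub rP rQ.
Proof.
move=> PrP QrQ; rewrite -lift_rsub.
by split=> PQ x y /PrP /PQ /QrQ.
Qed.

Lemma is_lift_rsame P r1 r2 : is_lift P r1 -> rsame r1 r2 -> is_lift P r2.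
Proof.
move=> Pr1 /andP[/allP sub12 /allP sub21] x y.
by rewrite Pr1; split=> [/sub12 | /sub21].
Qed.

Lemma mem_rinv r a c : ((a, c) \in rinv r) = ((c, a) \in r).
Proof. by apply/mapP/idP => [[[c' a'] r_ca [-> ->]] | r_ca] //; exists (c, a). Qed.

Lemma is_lift_rinv P r : is_lift P r -> is_lift (fun x y => P y x) (rinv r).
Proof. by move=> Pr x y; rewrite /lift mem_rinv Pr. Qed.

Lemma mem_rcomp r1 r2 a c :
  reflect (exists z, ((a, z) \in r1) && ((z, c) \in r2)) ((a, c) \in rcomp r1 r2).
Proof.
apply: (iffP allpairsPdep) => [[[a' z] [[z' c'] [r1az]]] | [z /andP[r1az r2zc]]].
  by rewrite mem_filter => /andP[/eqP /= -> r2zc] [-> ->]; exists z; rewrite r1az r2zc.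
by exists (a, z), (z, c); rewrite mem_filter /= eqxx r2zc.
Qed.

Lemma is_lift_compose P Q r1 r2 :
  is_lift P r1 -> is_lift Q r2 -> is_lift (compose P Q) (rcomp r1 r2).
Proof.
move=> Pr1 Qr2 x y; split=> [[z [/Pr1 Pxz /Qr2 Qzy]] | /mem_rcomp [k]].
  by apply/mem_rcomp; exists (key z); rewrite Pxz.
have [z <-] := key_surj k; case/andP=> r1xz r2zy.
by exists z; split; [apply/Pr1 | apply/Qr2].
Qed.

Lemma lifts_map (T : eqType) (f : T -> srel tax) (g : T -> pairs) (s : seq T) :
  (forall t, is_lift (f t) (g t)) -> lifts (map f s) (map g s).
Proof.
move=> fg; split=> [_ /In_map [t [<- /In_mem st]] | _ /mapP [t st ->]].
  by exists (g t); [apply: map_f | apply: fg].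
by exists (f t); [apply/In_map; exists t; split=> //; apply/In_mem | apply: fg].
Qed.

Lemma induced_lift G Rs x y :
  lifts G Rs -> induced G x y <-> (key x, key y) \in flatten Rs.
Proof.
case=> Glift Rlift; split=> [[P [GP Pxy]] | /flattenP [r Rr rxy]].
  by have [r Rr Pr] := Glift P GP; apply/flattenP; exists r; last exact/Pr.
by have [P GP Pr] := Rlift r Rr; exists P; split; last exact/Pr.
Qed.

(** * Removal of subsumed statements *)

Definition antichain (Rs : seq pairs) :=
  pairwise (fun r1 r2 => ~~ rsub r1 r2 && ~~ rsub r2 r1) Rs.

Lemma antichain_nth Rs i j :
  antichain Rs -> i < size Rs -> j < size Rs -> i != j ->
  ~~ rsub (nth [::] Rs i) (nth [::] Rs j).
Proof.
move/(pairwiseP [::]) => anti lt_i lt_j; case: ltngtP => // [ij | ji] _.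
  by case/andP: (anti i j lt_i lt_j ij).
by case/andP: (anti j i lt_j lt_i ji).
Qed.

Lemma antichain_eq Rs r1 r2 :
  antichain Rs -> r1 \in Rs -> r2 \in Rs -> rsub r1 r2 -> r1 = r2.
Proof.
move=> anti /(nthP [::]) [i lt_i <-] /(nthP [::]) [j lt_j <-].
by case: (eqVneq i j) => [-> // | ij]; rewrite (negPf (antichain_nth anti lt_i lt_j ij)).
Qed.

Lemma no_subsumed_eq (G : sform tax) Q Q' :
  no_subsumed G -> List.In Q G -> List.In Q' G -> rimplies Q Q' -> Q = Q'.
Proof.
move=> nosub /(In_nthP srel0) [i lt_i <-] /(In_nthP srel0) [j lt_j <-] QQ'.
by case: (eqVneq i j) => [-> // | /eqP ij]; case: (nosub i j lt_i lt_j ij QQ').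
Qed.

(* [T_step L] and [reduce L] both unfold to this shape. *)
Definition selects (Cand : srel tax -> Prop) (G : sform tax) :=
  (forall P, List.In P G -> Cand P) /\
  (forall P, Cand P -> exists Q, List.In Q G /\ rimplies P Q) /\
  no_subsumed G.

Definition lift_maximals (Cand : srel tax -> Prop) (Rs : seq pairs) :=
  [/\ forall P, Cand P -> exists2 r, r \in Rs & rimplies P (lift r),
      forall r, r \in Rs -> exists2 P, Cand P & is_lift P r
    & antichain Rs].

Lemma selects_exists Cand Rs : lift_maximals Cand Rs -> exists G, selects Cand G.
Proof.
case=> covered realized anti.
have realized_nth i : i < size Rs -> exists P, Cand P /\ is_lift P (nth [::] Rs i).
  by move=> lt_i; have [P] := realized _ (mem_nth [::] lt_i); exists P.
have [G size_G GRs] :=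
  @seq_choice _ _ srel0 [::] (fun P r => Cand P /\ is_lift P r) Rs realized_nth.
exists G; split; [|split].
- move=> P /(In_nthP srel0) [i]; rewrite size_G => lt_i <-; exact: proj1 (GRs i lt_i).
- move=> P /covered [r /(nthP [::]) [i lt_i <-] Pr]; exists (nth srel0 G i).
  by split; [apply: nth_In; rewrite size_G | move=> x y /Pr /(proj2 (GRs i lt_i))].
move=> i j; rewrite size_G => lt_i lt_j /eqP ij GiGj.
have /negP := antichain_nth anti lt_i lt_j ij; apply.
exact/(rimplies_lift (proj2 (GRs i lt_i)) (proj2 (GRs j lt_j))).
Qed.

Lemma selects_lifts Cand Rs G : lift_maximals Cand Rs -> selects Cand G -> lifts G Rs.
Proof.
case=> covered realized anti [GCand [Gcovers nosub]]; split.
  move=> Q GQ; have [r Rr Qr] := covered Q (GCand Q GQ).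
  have [P CP Pr] := realized r Rr; have [Q' [GQ' PQ']] := Gcovers P CP.
  have QQ' : Q = Q' by apply: no_subsumed_eq nosub GQ GQ' _ => x y /Qr /Pr /PQ'.
  by exists r => // x y; split=> [/Qr | /Pr /PQ']; rewrite ?QQ'.
move=> r Rr; have [P CP Pr] := realized r Rr; have [Q [GQ PQ]] := Gcovers P CP.
have [r' Rr' Qr'] := covered Q (GCand Q GQ).
have rr' : r = r'.
  by apply: antichain_eq anti Rr Rr' _; apply/lift_rsub => x y /Pr /PQ /Qr'.
rewrite rr' in Pr *; exists Q => // x y; split=> [/Qr' // | /Pr /PQ //].
Qed.

Definition maximals (C Rs : seq pairs) :=
  [&& all (fun r => has (rsame r) C) Rs, all (fun c => has (rsub c) Rs) C & antichain Rs].

Lemma maximals_In L C Rs :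
  lifts L C -> maximals C Rs -> lift_maximals (fun P => List.In P L) Rs.
Proof.
case=> Llift Clift /and3P[/allP realized /allP covered anti]; split=> //.
  move=> P /Llift [c Cc Pc]; have /hasP [r Rr cr] := covered c Cc.
  by exists r => // x y /Pc /(rsub_lift cr).
move=> r Rr; have /hasP [c Cc /andP[rc cr]] := realized r Rr.
have [P LP Pc] := Clift c Cc.
by exists P => //; apply: is_lift_rsame Pc _; rewrite /rsame cr rc.
Qed.

(** * Transitive closure *)

(* The compositions of at most [n + 1] relations of [Rs]. *)
Definition words (n : nat) (Rs : seq pairs) :=
  iter n (fun C => C ++ [seq rcomp c r | c <- C, r <- Rs]) Rs.

Definition comp_closed (Rs' Rs : seq pairs) :=
  all (fun r' => all (fun r => has (rsub (rcomp r' r)) Rs') Rs) Rs'.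

Lemma mem_words Rs n : {subset Rs <= words n Rs}.
Proof. by elim: n => [|n IH] r //= /IH; rewrite mem_cat => ->. Qed.

Lemma words_chain L Rs n c :
  lifts L Rs -> c \in words n Rs -> exists2 P, chain L P & is_lift P c.
Proof.
case=> _ Rlift; elim: n c => [|n IH] c /=.
  by move=> /Rlift [P LP Pc]; exists P => //; apply: chain_base.
rewrite mem_cat => /orP[/IH // | /allpairsP [[c' r] [/= /IH [P chP Pc'] Rr ->]]].
have [Q LQ Qr] := Rlift r Rr.
by exists (compose P Q); [apply: chain_comp | apply: is_lift_compose].
Qed.

Lemma maximals_chain L Rs Rs' n :
  lifts L Rs -> comp_closed Rs' Rs -> maximals (words n Rs) Rs' ->
  lift_maximals (chain L) Rs'.
Proof.
move=> LRs /allP closed /and3P[/allP realized /allP covered anti].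
have [Llift _] := LRs; split=> //.
  move=> ?; elim=> [P /Llift [r Rr Pr] | P Q _ [r' Rr' Pr'] /Llift [r Rr Qr]].
    have /hasP [r' Rr' rr'] := covered r (mem_words n Rr).
    by exists r' => // x y /Pr /(rsub_lift rr').
  have /hasP [r'' Rr'' sub] := allP (closed r' Rr') r Rr.
  exists r'' => // x y [z [/Pr' Pxz /Qr Qzy]].
  by apply: (rsub_lift sub); apply/mem_rcomp; exists (key z); rewrite Pxz.
move=> r Rr; have /hasP [c Wc /andP[rc cr]] := realized r Rr.
have [P chP Pc] := words_chain LRs Wc.
by exists P => //; apply: is_lift_rsame Pc _; rewrite /rsame cr rc.
Qed.

(** * Specificity-based refinement *)

Definition rimpl (ri rj : pairs) := rsub (rinv rj) ri && ~~ rsub ri (rinv rj).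

Definition refine (Rs : seq pairs) (r : pairs) : pairs :=
  [seq p <- r | all (fun r' => ~~ rimpl r r' || ((p.2, p.1) \notin r')) Rs].

Definition sround (Rs : seq pairs) := map (refine Rs) Rs.

Definition noimpl (Rs : seq pairs) := all (fun r => all (fun r' => ~~ rimpl r r') Rs) Rs.

Definition refined (L : sform tax) (i : nat) : srel tax := fun x y =>
  nth srel0 L i x y /\ forall j, j < size L -> Impl L i j -> ~ nth srel0 L j y x.

Lemma size_S_round (L : sform tax) : size (S_round L) = size L.
Proof. by rewrite size_map size_iota. Qed.

Lemma nth_S_round (L : sform tax) i : i < size L -> nth srel0 (S_round L) i = refined L i.
Proof. by move=> lt_i; rewrite (nth_map 0) ?size_iota // nth_iota. Qed.

Lemma Impl_lift (L : sform tax) i j ri rj :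
  is_lift (nth srel0 L i) ri -> is_lift (nth srel0 L j) rj -> Impl L i j <-> rimpl ri rj.
Proof.
move=> Pi Pj; have ji := rimplies_lift (is_lift_rinv Pj) Pi.
have ij := rimplies_lift Pi (is_lift_rinv Pj).
split=> [[/ji sub nij] | /andP[/ji sub /negP nij]]; last by split=> // /ij.
by rewrite /rimpl sub; apply/negP => /ij.
Qed.

Lemma is_lift_refined L Rs i r :
  lifts L Rs -> i < size L -> is_lift (nth srel0 L i) r -> is_lift (refined L i) (refine Rs r).
Proof.
case=> Llift Rlift lt_i Pr x y; rewrite /lift mem_filter.
split=> [[/Pr rxy noImpl] | /andP[/allP noimp /Pr Pxy]].
  rewrite rxy andbT; apply/allP => r' Rr'; have [P' LP' P'r'] := Rlift r' Rr'.
  have /(In_nthP srel0) [j lt_j ej] := LP'; rewrite -ej in P'r'.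
  case: (boolP (rimpl r r')) => //= imp; apply/negP => r'yx.
  exact: (noImpl j lt_j (proj2 (Impl_lift Pr P'r') imp) (proj2 (P'r' y x) r'yx)).
split=> // j lt_j imp Pjyx.
have [r' Rr' P'r'] := Llift _ (nth_In srel0 lt_j).
have := noimp r' Rr'; rewrite (proj1 (Impl_lift Pr P'r') imp) /=.
by move/negP; apply; apply/P'r'.
Qed.

Lemma lifts_S_round L Rs : lifts L Rs -> lifts (S_round L) (sround Rs).
Proof.
move=> LRs; have [Llift Rlift] := LRs; split.
  move=> P /(In_nthP srel0) [i]; rewrite size_S_round => lt_i <-.
  have [r Rr Pr] := Llift _ (nth_In srel0 lt_i).
  by exists (refine Rs r); [apply: map_f | rewrite nth_S_round //; apply: is_lift_refined].
move=> _ /mapP [r Rr ->]; have [P LP Pr] := Rlift r Rr.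
have /(In_nthP srel0) [i lt_i ei] := LP.
exists (refined L i); last by apply: is_lift_refined; rewrite ?ei.
by rewrite -nth_S_round //; apply: nth_In; rewrite size_S_round.
Qed.

Lemma lifts_iter_S_round n L Rs :
  lifts L Rs -> lifts (iter n (@S_round d tax) L) (iter n sround Rs).
Proof. by move=> LRs; elim: n => //= n; apply: lifts_S_round. Qed.

Lemma no_Impl_lift L Rs : lifts L Rs -> no_Impl L <-> noimpl Rs.
Proof.
case=> Llift Rlift; split=> [noI | /allP noi i j lt_i lt_j].
  apply/allP => r Rr; apply/allP => r' Rr'; apply/negP => imp.
  have [P LP Pr] := Rlift r Rr; have [P' LP' P'r'] := Rlift r' Rr'.
  have /(In_nthP srel0) [i lt_i ei] := LP.
  have /(In_nthP srel0) [j lt_j ej] := LP'.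
  by apply: (noI i j lt_i lt_j); apply/(Impl_lift (ri := r) (rj := r')); rewrite ?ei ?ej.
have [r Rr Pr] := Llift _ (nth_In srel0 lt_i).
have [r' Rr' Pr'] := Llift _ (nth_In srel0 lt_j).
by move/(Impl_lift Pr Pr'); apply/negP: (allP (noi r Rr) r' Rr').
Qed.

Lemma sround_id Rs : noimpl Rs -> sround Rs = Rs.
Proof.
move=> /allP noi; rewrite -[RHS]map_id; apply/eq_in_map => r Rr.
apply/all_filterP/allP => p _; apply/allP => r' Rr'.
by rewrite (negPf (allP (noi r Rr) r' Rr')).
Qed.

Lemma iter_sround_noimpl m n Rs :
  noimpl (iter m sround Rs) -> noimpl (iter n sround Rs) ->
  iter n sround Rs = iter m sround Rs.
Proof.
have stable k j : noimpl (iter k sround Rs) -> iter (j + k) sround Rs = iter k sround Rs.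
  by move=> nk; elim: j => //= j IH; rewrite IH sround_id.
by move=> nm nn; rewrite -(stable n m nn) addnC stable.
Qed.

Definition step_lifts (step : sform tax -> sform tax -> Prop) L (Rs : seq pairs) :=
  (exists G, step L G) /\ (forall G, step L G -> lifts G Rs).

Lemma T_step_lifts L Rs Rs' n :
  lifts L Rs -> comp_closed Rs' Rs -> maximals (words n Rs) Rs' ->
  step_lifts (@T_step d tax) L Rs'.
Proof.
move=> LRs closed max; have chain_max := maximals_chain LRs closed max.
by split=> [|G]; [apply: selects_exists chain_max | apply: selects_lifts chain_max].
Qed.

Lemma S_step_lifts L Rs Rs' m :
  lifts L Rs -> noimpl (iter m sround Rs) -> maximals (iter m sround Rs) Rs' ->
  step_lifts (@S_step d tax) L Rs'.
Proof.
move=> LRs noim max.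
have max_In n : no_Impl (iter n (@S_round d tax) L) ->
    lift_maximals (fun P => List.In P (iter n (@S_round d tax) L)) Rs'.
  move=> noI; have Ln := lifts_iter_S_round n LRs.
  rewrite -(iter_sround_noimpl noim (proj1 (no_Impl_lift Ln) noI)) in max.
  exact: maximals_In Ln max.
have noIm := proj2 (no_Impl_lift (lifts_iter_S_round m LRs)) noim.
split=> [|G [n [noI red]]]; last exact: selects_lifts (max_In n noI) red.
by have [G ?] := selects_exists (max_In m noIm); exists G, m.
Qed.

End Lifting.

(** * The counterexample *)

Definition discrete_taxonomy (T : Type) : Taxonomy :=
  {| tcar := T; tle := eq; tle_refl := @erefl T;
     tle_antisym := fun a b ab _ => ab; tle_trans := @etrans T |}.

Inductive value := A | B | C.

Definition value_eqb (u v : value) :=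
  match u, v with A, A | B, B | C, C => true | _, _ => false end.

Lemma value_eqP : Equality.axiom value_eqb.
Proof. by do 2 case; constructor. Qed.

HB.instance Definition _ := hasDecEq.Build value value_eqP.

Definition tax3 (_ : 'I_1) : Taxonomy := discrete_taxonomy value.

Definition key3 (x : ttuple tax3) : option value := x ord0.

Lemma key3_surj k : exists x, key3 x = k.
Proof. by exists (fun _ => k). Qed.

Definition pair_statement (s : seq (value * value)) : statement tax3 :=
  [seq [:: @AxLe 1 tax3 ord0 p.1; @AyLe 1 tax3 ord0 p.2] | p <- s].

Definition pairs_of (s : seq (value * value)) : seq (option value * option value) :=
  [seq (Some p.1, Some p.2) | p <- s].

Lemma clause_pair_sem a c x y :
  clause_sem [:: @AxLe 1 tax3 ord0 a; @AyLe 1 tax3 ord0 c] x y <->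
  key3 x = Some a /\ key3 y = Some c.
Proof.
rewrite /clause_sem /key3; split=> [sem | [xa yc] _ [<- | [<- | []]]] /=; rewrite ?xa ?yc //.
move: (sem _ (or_introl erefl)) (sem _ (or_intror (or_introl erefl))) => /=.
by case: (x ord0) => // u; case: (y ord0) => // v /= -> ->.
Qed.

Lemma is_lift_pair_statement s :
  is_lift key3 (statement_sem (pair_statement s)) (pairs_of s).
Proof.
move=> x y; rewrite /lift; elim: s => [|[a c] s IH] /=; first by split=> // -[? []].
rewrite in_cons xpair_eqE; split.
  move=> [cl [[<- | s_cl] cl_sem]]; last by apply/orP; right; apply/IH; exists cl.
  by case/clause_pair_sem: cl_sem => -> ->; rewrite !eqxx.
case/orP=> [/andP[/eqP xa /eqP yc] | /IH [cl [s_cl cl_sem]]].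
  by eexists; split; [left | apply/clause_pair_sem].
by exists cl; split; [right|].
Qed.

Definition M_pairs : seq (seq (value * value)) :=
  [:: [:: (B, A); (B, C); (C, A); (C, C)];
      [:: (A, B); (C, B)];
      [:: (B, B); (C, B)];
      [:: (B, B); (C, C)];
      [:: (B, C); (C, B)];
      [:: (A, A); (A, C); (C, A); (C, C)]].

Definition N_pairs : seq (seq (value * value)) :=
  [:: [:: (A, A); (C, A)];
      [:: (A, B); (C, B)];
      [:: (B, B); (C, B)];
      [:: (B, B); (C, C)];
      [:: (B, C); (C, B)];
      [:: (C, A); (C, C)]].

Local Notation F3 := (map pair_statement M_pairs).

Local Notation M := (map pairs_of M_pairs).
Local Notation N := (map pairs_of N_pairs).

Lemma wf_F3 : wf_formula F3.
Proof.
move=> st cl /In_map [s [<- _]] /In_map [[a c] [<- _]].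
by exists (fun _ => Some a), (fun _ => Some c); apply/clause_pair_sem.
Qed.

Lemma lifts_F3 : lifts key3 (formula_sem F3) M.
Proof.
rewrite /formula_sem -(map_comp (@statement_sem 1 tax3) pair_statement).
by apply: lifts_map => s; apply: is_lift_pair_statement.
Qed.

Lemma T_step_to_M L :
  lifts key3 L M \/ lifts key3 L N -> step_lifts key3 (@T_step 1 tax3) L M.
Proof.
(* Each statement of M is a composite of at most three statements of N. *)
case=> LRs; [apply: (T_step_lifts key3_surj (n := 0) LRs) |
              apply: (T_step_lifts key3_surj (n := 2) LRs)]; by vm_compute.
Qed.

Lemma S_step_to_N L :
  lifts key3 L M \/ lifts key3 L N -> step_lifts key3 (@S_step 1 tax3) L N.
Proof.
case=> LRs; [apply: (S_step_lifts key3_surj (m := 2) LRs) |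
              apply: (S_step_lifts key3_surj (m := 0) LRs)]; by vm_compute.
Qed.

Lemma N_not_transitive G : lifts key3 G N -> ~ rtransitive (strict_part (induced G)).
Proof.
move=> GN trans; pose t v : ttuple tax3 := fun _ => Some v.
have ind u v : induced G (t u) (t v) <-> (Some u, Some v) \in flatten N.
  exact: induced_lift GN.
have CA : strict_part (induced G) (t C) (t A) by split=> [|/ind]; [apply/ind|].
have AB : strict_part (induced G) (t A) (t B) by split=> [|/ind]; [apply/ind|].
by case: (trans _ _ _ CA AB) => _; apply; apply/ind.
Qed.

Theorem mainTheorem8 :
  forall X : list op,
    exists (d : nat) (tax : 'I_d -> Taxonomy) (F : formula tax),
      wf_formula F /\
      (exists G, outcome (X ++ [:: OpS]) (formula_sem F) G) /\
      (forall G, outcome (X ++ [:: OpS]) (formula_sem F) G ->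
                 ~ rtransitive (strict_part (induced G))).
Proof.
move=> X; exists 1, tax3, F3; split; first exact: wf_F3.
pose Inv L := lifts key3 L M \/ lifts key3 L N.
have step o L : Inv L -> (exists G, op_step o L G) /\ (forall G, op_step o L G -> Inv G).
  case: o => InvL; [have [? TM] := T_step_to_M InvL | have [? SN] := S_step_to_N InvL].
    by split=> // G /TM; left.
  by split=> // G /SN; right.
have final L G : Inv L -> S_step L G -> lifts key3 G N by move=> /S_step_to_N [_]; apply.
have [? outN] := outcome_snoc_S step final X (or_introl lifts_F3).
by split=> // G /outN /N_not_transitive.
Qed.
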